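(* Let $m_{max} \ge 1$ be a fixed positive integer. Then \[ \pi = i \lim_{k\to\infty} 2^{k+1} \sum_{m=1}^{m_{max}} \frac{1}{2m-1}\left( \frac{1}{\left(1 + 2i\, a_k/\sqrt{2 - a_{k-1}}\right)^{2m-1}} - \frac{1}{\left(1 - 2i\, a_k/\sqrt{2 - a_{k-1}}\right)^{2m-1}} \right). \]
   Context: Here $i$ is the imaginary unit. The nested radicals $a_k$ are defined by $a_0 = 0$ and $a_k = \sqrt{2 + a_{k-1}}$ for $k \ge 1$. Thus $a_k = \sqrt{2+\sqrt{2+\cdots+\sqrt{2}}}$ with $k$ square roots. *)

From Stdlib Require Import Reals.
From Coquelicot Require Import Coquelicot.
Open Scope R_scope.

Fixpoint a (k : nat) : R :=
  match k with
  | O => 0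
  | S j => sqrt (2 + a j)
  end.

(* x_k = a_k / sqrt(2 - a_{k-1}); for k = 0 we use a_{0-1} := a_0 (truncated
   subtraction), which is irrelevant for the limit k -> oo. *)
Definition xk (k : nat) : R := a k / sqrt (2 - a (k - 1)).

Definition term (mmax k : nat) : C :=
  Cmult (RtoC (2 ^ (k + 1)))
    (sum_n_m (fun m : nat =>
        Cmult (RtoC (/ INR (2 * m - 1)))
          (Cminus (Cinv (pow_n (Cplus (RtoC 1) (Cmult (RtoC (2 * xk k)) Ci)) (2 * m - 1)))
                  (Cinv (pow_n (Cminus (RtoC 1) (Cmult (RtoC (2 * xk k)) Ci)) (2 * m - 1)))))
      1 mmax).

From Stdlib Require Import Reals Lra Lia Psatz.
From Coquelicot Require Import Coquelicot.
Open Scope R_scope.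

(* With [theta k = PI / 2^(k+1)] one has [a k = 2 cos (theta k)] and
   [sqrt (2 - a (k-1)) = 2 sin (theta k)], so [xk k = cot (theta k)].  The
   summand [m = 1] equals [-4 i x / (1 + 4 x^2)], and since [xk k] behaves like
   [1 / theta k], multiplying it by [2^(k+1) = PI / theta k] gives a sequence
   tending to [-i PI].  Every summand with [m >= 2] is [O(x^-3) = O(theta k ^ 3)],
   so after multiplication by [PI / theta k] the remaining sum is
   [O(theta k ^ 2)] and vanishes in the limit. *)

Definition theta (k : nat) : R := PI / 2 ^ (k + 1).

Lemma theta_gt0 k : 0 < theta k.
Proof. apply Rdiv_lt_0_compat; [exact PI_RGT_0 | apply pow_lt; lra]. Qed.

Lemma theta_S k : theta k = 2 * theta (S k).
Proof.
  unfold theta; rewrite Nat.add_succ_l; cbn [pow].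
  field; apply pow_nonzero; lra.
Qed.

Lemma theta_le_PI2 k : theta k <= PI / 2.
Proof.
  unfold theta; rewrite pow_add, pow_1.
  assert (1 <= 2 ^ k) by (apply pow_R1_Rle; lra).
  apply Rmult_le_compat_l; [pose proof PI_RGT_0; lra |].
  apply Rinv_le_contravar; lra.
Qed.

Lemma sin_theta_gt0 k : 0 < sin (theta k).
Proof.
  apply sin_gt_0; [apply theta_gt0 |].
  pose proof (theta_le_PI2 k); pose proof PI_RGT_0; lra.
Qed.

Lemma cos_theta_S_gt0 k : 0 < cos (theta (S k)).
Proof.
  pose proof (theta_S k); pose proof (theta_le_PI2 k); pose proof (theta_gt0 (S k)).
  apply cos_gt_0; pose proof PI_RGT_0; lra.
Qed.

Lemma is_lim_seq_theta : is_lim_seq theta 0.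
Proof.
  apply is_lim_seq_ext with (fun k => PI / 2 * (/ 2) ^ k).
  { intros k; unfold theta; rewrite pow_add, pow_inv.
    field; apply pow_nonzero; lra. }
  replace (Finite 0) with (Rbar_mult (PI / 2) 0) by (simpl; f_equal; ring).
  apply is_lim_seq_scal_l, is_lim_seq_geom; rewrite Rabs_pos_eq; lra.
Qed.

Lemma a_cos_theta k : a k = 2 * cos (theta k).
Proof.
  induction k as [|k IH]; simpl a.
  - unfold theta; simpl; replace (PI / (2 * 1)) with (PI / 2) by field.
    rewrite cos_PI2; ring.
  - rewrite IH, (theta_S k), cos_2a_cos.
    replace (2 + 2 * (2 * cos (theta (S k)) * cos (theta (S k)) - 1))
      with ((2 * cos (theta (S k)))²) by (unfold Rsqr; ring).
    apply sqrt_Rsqr; pose proof (cos_theta_S_gt0 k); lra.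
Qed.

Lemma xk_cot_theta k : xk (S k) = cos (theta (S k)) / sin (theta (S k)).
Proof.
  unfold xk; rewrite Nat.sub_succ, Nat.sub_0_r, !a_cos_theta, (theta_S k), cos_2a_sin.
  pose proof (sin_theta_gt0 (S k)).
  replace (2 - 2 * (1 - 2 * sin (theta (S k)) * sin (theta (S k))))
    with ((2 * sin (theta (S k)))²) by (unfold Rsqr; ring).
  rewrite sqrt_Rsqr by lra; field; lra.
Qed.

Lemma is_lim_seq_sin_theta : is_lim_seq (fun k => sin (theta k)) 0.
Proof.
  replace (Finite 0) with (Finite (sin 0)) by now rewrite sin_0.
  exact (is_lim_seq_continuous _ _ _ (continuity_sin 0) is_lim_seq_theta).
Qed.

Lemma is_lim_seq_cos_theta : is_lim_seq (fun k => cos (theta k)) 1.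
Proof.
  replace (Finite 1) with (Finite (cos 0)) by now rewrite cos_0.
  exact (is_lim_seq_continuous _ _ _ (continuity_cos 0) is_lim_seq_theta).
Qed.

Lemma is_lim_seq_sinc_theta : is_lim_seq (fun k => sin (theta k) / theta k) 1.
Proof.
  apply (is_lim_comp_seq (fun x => sin x / x) theta 0 1 is_lim_sinc_0);
    [| exact is_lim_seq_theta].
  exists 0%nat; intros k _ E; injection E; pose proof (theta_gt0 k); lra.
Qed.

(* For [x = cot t] and [2^(k+1) = PI / t], [main_part t] is
   [2^(k+1) * 4 x / (1 + 4 x^2)] and [tail_part mmax t] is
   [2^(k+1) * mmax * 2 / (2 x)^3], the bound on the summands [m >= 2]. *)
Definition main_part (t : R) : R :=
  PI * (sin t / t) * (4 * cos t / (sin t * sin t + 4 * (cos t * cos t))).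

Definition tail_part (mmax : nat) (t : R) : R :=
  PI * INR mmax / 4 * (sin t / t) * (sin t * sin t / (cos t * (cos t * cos t))).

Lemma is_lim_seq_main_part : is_lim_seq (fun k => main_part (theta k)) PI.
Proof.
  unfold main_part.
  replace (Finite PI) with (Finite (PI * 1 * (4 * 1 / (0 * 0 + 4 * (1 * 1)))))
    by (f_equal; field).
  pose proof is_lim_seq_sin_theta; pose proof is_lim_seq_cos_theta.
  apply is_lim_seq_mult';
    [apply is_lim_seq_mult'; [apply is_lim_seq_const | apply is_lim_seq_sinc_theta] |].
  apply is_lim_seq_div'; [apply is_lim_seq_mult'; [apply is_lim_seq_const | assumption] | | lra].
  apply is_lim_seq_plus'; [apply is_lim_seq_mult'; assumption |].
  apply is_lim_seq_mult'; [apply is_lim_seq_const | apply is_lim_seq_mult'; assumption].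
Qed.

Lemma is_lim_seq_tail_part mmax : is_lim_seq (fun k => tail_part mmax (theta k)) 0.
Proof.
  unfold tail_part.
  replace (Finite 0) with (Finite (PI * INR mmax / 4 * 1 * (0 * 0 / (1 * (1 * 1)))))
    by (f_equal; field).
  pose proof is_lim_seq_sin_theta; pose proof is_lim_seq_cos_theta.
  apply is_lim_seq_mult';
    [apply is_lim_seq_mult'; [apply is_lim_seq_const | apply is_lim_seq_sinc_theta] |].
  apply is_lim_seq_div'; [apply is_lim_seq_mult'; assumption | | lra].
  apply is_lim_seq_mult'; [assumption | apply is_lim_seq_mult'; assumption].
Qed.

Lemma C1_plus_imag (y : R) : Cplus (RtoC 1) (Cmult (RtoC y) Ci) = (1, y).
Proof. apply injective_projections; simpl; ring. Qed.

Lemma C1_minus_imag (y : R) : Cminus (RtoC 1) (Cmult (RtoC y) Ci) = (1, - y).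
Proof. apply injective_projections; simpl; ring. Qed.

Lemma Cmod_imag (y : R) : Cmod (0, y) = Rabs y.
Proof. unfold Cmod; simpl; rewrite <- sqrt_Rsqr_abs; f_equal; unfold Rsqr; ring. Qed.

Lemma Cmod_1_imag_ge (y : R) : 1 <= Cmod (1, y) /\ Rabs y <= Cmod (1, y).
Proof.
  unfold Cmod; simpl; split.
  - rewrite <- sqrt_1 at 1; apply sqrt_le_1_alt; nra.
  - rewrite <- sqrt_Rsqr_abs; apply sqrt_le_1_alt; unfold Rsqr; nra.
Qed.

Lemma Cmod_pow_n (z : C) (n : nat) : Cmod (pow_n z n) = Cmod z ^ n.
Proof.
  induction n as [|n IH]; simpl; [apply Cmod_1 |].
  change (Cmod (Cmult z (pow_n z n)) = Cmod z * Cmod z ^ n).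
  now rewrite Cmod_mult, IH.
Qed.

Lemma Cmod_inv_pow_1_imag_le (y : R) (n : nat) : y <> 0 -> (3 <= n)%nat ->
  Cmod (Cinv (pow_n ((1, y) : C) n)) <= / Rabs y ^ 3.
Proof.
  intros Hy Hn; destruct (Cmod_1_imag_ge y) as [H1 Habs].
  assert (Hy0 : 0 < Rabs y) by now apply Rabs_pos_lt.
  rewrite Cmod_inv, Cmod_pow_n.
  - apply Rinv_le_contravar; [now apply pow_lt |].
    apply Rle_trans with (Cmod (1, y) ^ 3);
      [apply pow_incr; lra | now apply Rle_pow].
  - intro E; apply (f_equal Cmod) in E.
    rewrite Cmod_pow_n, Cmod_0 in E; apply pow_nonzero in E; [exact E | lra].
Qed.

Definition summand (x : R) (m : nat) : C :=
  Cmult (RtoC (/ INR (2 * m - 1)))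
    (Cminus (Cinv (pow_n (Cplus (RtoC 1) (Cmult (RtoC (2 * x)) Ci)) (2 * m - 1)))
            (Cinv (pow_n (Cminus (RtoC 1) (Cmult (RtoC (2 * x)) Ci)) (2 * m - 1)))).

Lemma summand_1 (x : R) : summand x 1 = (0, - (4 * x / (1 + 4 * x ^ 2))).
Proof.
  unfold summand; rewrite C1_plus_imag, C1_minus_imag; simpl.
  unfold Cinv, Cmult, Cminus, Cplus, Copp, RtoC; simpl.
  apply injective_projections; simpl; field; nra.
Qed.

Lemma Cmod_summand_le (x : R) (m : nat) : 0 < x -> (2 <= m)%nat ->
  Cmod (summand x m) <= 2 / (2 * x) ^ 3.
Proof.
  intros Hx Hm; unfold summand; rewrite C1_plus_imag, C1_minus_imag.
  assert (Hn : (3 <= 2 * m - 1)%nat) by lia.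
  assert (Hp : Cmod (Cinv (pow_n ((1, 2 * x) : C) (2 * m - 1))) <= / (2 * x) ^ 3).
  { rewrite <- (Rabs_pos_eq (2 * x)) at 2 by lra.
    apply Cmod_inv_pow_1_imag_le; [lra | exact Hn]. }
  assert (Hq : Cmod (Cinv (pow_n ((1, - (2 * x)) : C) (2 * m - 1))) <= / (2 * x) ^ 3).
  { rewrite <- (Rabs_pos_eq (2 * x)) at 2 by lra; rewrite <- Rabs_Ropp.
    apply Cmod_inv_pow_1_imag_le; [lra | exact Hn]. }
  assert (Hc : 0 < / INR (2 * m - 1) <= 1).
  { assert (1 <= INR (2 * m - 1)) by (apply (le_INR 1); lia).
    split; [apply Rinv_0_lt_compat; lra | rewrite <- Rinv_1; apply Rinv_le_contravar; lra]. }
  rewrite Cmod_mult, Cmod_R, Rabs_pos_eq by lra.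
  assert (Hd : Cmod (Cminus (Cinv (pow_n ((1, 2 * x) : C) (2 * m - 1)))
                            (Cinv (pow_n ((1, - (2 * x)) : C) (2 * m - 1)))) <= 2 / (2 * x) ^ 3).
  { unfold Cminus; eapply Rle_trans; [apply Cmod_triangle |].
    rewrite Cmod_opp; unfold Rdiv; lra. }
  pose proof (Cmod_ge_0 (Cminus (Cinv (pow_n ((1, 2 * x) : C) (2 * m - 1)))
                                (Cinv (pow_n ((1, - (2 * x)) : C) (2 * m - 1))))).
  nra.
Qed.

Lemma Cmod_sum_n_m_le (f : nat -> C) (B : R) (n m : nat) : 0 <= B ->
  (forall k, (n <= k)%nat -> Cmod (f k) <= B) ->
  Cmod (sum_n_m f n m) <= INR (S m - n) * B.
Proof.
  intros HB Hf; induction m as [|m IH].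
  - destruct n as [|n].
    + rewrite sum_n_n; simpl INR; specialize (Hf 0%nat (le_n 0)); lra.
    + rewrite sum_n_m_zero by lia.
      change (Cmod zero) with (Cmod 0); rewrite Cmod_0; simpl INR; lra.
  - destruct (Nat.le_gt_cases n (S m)) as [Hnm | Hnm].
    + rewrite sum_n_Sm by exact Hnm.
      change (plus ?u ?v) with (Cplus u v).
      rewrite Nat.sub_succ_l, S_INR by lia.
      eapply Rle_trans; [apply Cmod_triangle |].
      specialize (Hf (S m) Hnm); lra.
    + rewrite sum_n_m_zero by lia.
      change (Cmod zero) with (Cmod 0); rewrite Cmod_0.
      apply Rmult_le_pos; [apply pos_INR | exact HB].
Qed.

Lemma Cmod_sum_summand_tail_le (x : R) (mmax : nat) : 0 < x ->
  Cmod (sum_n_m (summand x) 2 mmax) <= INR mmax * (2 / (2 * x) ^ 3).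
Proof.
  intros Hx.
  assert (HB : 0 <= 2 / (2 * x) ^ 3).
  { apply Rlt_le, Rdiv_lt_0_compat; [lra | apply pow_lt; lra]. }
  eapply Rle_trans.
  - apply Cmod_sum_n_m_le; [exact HB |].
    intros m Hm; exact (Cmod_summand_le x m Hx Hm).
  - apply Rmult_le_compat_r; [exact HB | apply le_INR; lia].
Qed.

Lemma term_error_le (mmax k : nat) : (1 <= mmax)%nat ->
  Cmod (Cminus (term mmax (S k)) (0, - PI)) <=
  Rabs (main_part (theta (S k)) - PI) + tail_part mmax (theta (S k)).
Proof.
  intros Hm.
  pose proof (theta_gt0 (S k)) as Ht; pose proof (sin_theta_gt0 (S k)) as Hs.
  pose proof (cos_theta_S_gt0 k) as Hc; pose proof (xk_cot_theta k) as Hx.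
  set (t := theta (S k)) in *; set (x := xk (S k)) in *.
  assert (Hx0 : 0 < x) by (rewrite Hx; apply Rdiv_lt_0_compat; lra).
  assert (Hpow : 2 ^ (S k + 1) = PI / t).
  { unfold t, theta; field; split; [apply pow_nonzero |]; pose proof PI_RGT_0; lra. }
  change (term mmax (S k)) with (Cmult (RtoC (2 ^ (S k + 1))) (sum_n_m (summand x) 1 mmax)).
  rewrite (sum_n_m_Chasles _ 1 1 mmax), sum_n_n, summand_1, Hpow by lia.
  change (plus ?u ?v) with (Cplus u v).
  set (tail := sum_n_m (summand x) 2 mmax).
  replace (Cminus (Cmult (RtoC (PI / t)) (Cplus (0, - (4 * x / (1 + 4 * x ^ 2))) tail)) (0, - PI))
    with (Cplus (0, PI - main_part t) (Cmult (RtoC (PI / t)) tail)).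
  2:{ unfold main_part; rewrite Hx.
      unfold Cmult, Cplus, Cminus, Copp, RtoC; simpl.
      apply injective_projections; simpl; field; nra. }
  eapply Rle_trans; [apply Cmod_triangle |].
  rewrite Cmod_imag, Rabs_minus_sym; apply Rplus_le_compat_l.
  assert (Hr : 0 < PI / t) by (apply Rdiv_lt_0_compat; [exact PI_RGT_0 | exact Ht]).
  rewrite Cmod_mult, Cmod_R, Rabs_pos_eq by lra.
  eapply Rle_trans;
    [apply Rmult_le_compat_l; [lra | exact (Cmod_sum_summand_tail_le x mmax Hx0)] |].
  right; unfold tail_part; rewrite Hx; field; lra.
Qed.

Lemma filterlim_of_Cmod_le (f : nat -> C) (l : C) (e : nat -> R) :
  is_lim_seq e 0 -> eventually (fun k => Cmod (Cminus (f k) l) <= e k) ->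
  filterlim f eventually (locally l).
Proof.
  intros He Hb.
  apply (proj2 (@filterlim_locally_ball_norm C_AbsRing nat C_NormedModule eventually _ f l)).
  intros eps.
  pose proof (proj2 (is_lim_seq_spec e 0) He eps) as Heps.
  generalize (filter_and _ _ Hb Heps); apply filter_imp; intros k [Hk Hek].
  change (Cmod (Cminus (f k) l) < eps).
  rewrite Rminus_0_r in Hek; pose proof (Rle_abs (e k)); lra.
Qed.

Theorem mainTheorem2 (mmax : nat) (Hm : (1 <= mmax)%nat) :
  exists L : C,
    filterlim (fun k : nat => term mmax k) eventually (locally L) /\
    RtoC PI = Cmult Ci L.
Proof.
  exists (0, - PI); split.
  - apply filterlim_of_Cmod_le with
      (e := fun k => Rabs (main_part (theta k) - PI) + tail_part mmax (theta k)).
    + replace (Finite 0) with (Finite (0 + 0)) by (f_equal; ring).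
      apply is_lim_seq_plus'; [| apply is_lim_seq_tail_part].
      apply (is_lim_seq_abs_0 (fun k => main_part (theta k) - PI)).
      replace (Finite 0) with (Finite (PI - PI)) by (f_equal; ring).
      apply is_lim_seq_minus'; [apply is_lim_seq_main_part | apply is_lim_seq_const].
    + exists 1%nat; intros [|k] Hk; [lia | exact (term_error_le mmax k Hm)].
  - apply injective_projections; simpl; ring.
Qed.
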